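(* Let $X$ be a real Banach space with dual $X^*$, and let $f:X\to\mathbb{R}\cup\{+\infty\}$ be a proper, convex and lower semicontinuous function. Suppose that \[ p(x)\ge 0\quad\text{for every } x\in\operatorname{dom}\partial f \text{ and every } p\in\partial f(x). \] Then $0\in\partial f(0)$.
   Context: For $x_0\in\operatorname{dom} f:=\{x\in X: f(x)\neq+\infty\}$, the (convex-analysis) subdifferential is $\partial f(x_0):=\{p\in X^*: f(x)\ge f(x_0)+p(x-x_0)\ \forall x\in X\}$; if $x_0\notin\operatorname{dom} f$ then $\partial f(x_0)=\emptyset$. The set $\operatorname{dom}\partial f:=\{x\in X:\partial f(x)\neq\emptyset\}$. The hypothesis is written in the paper as $\langle \partial f(x),x\rangle\ge 0$ for all $x\in\operatorname{dom}\partial f$. *)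

From HB Require Import structures.
From mathcomp Require Import all_boot all_order all_algebra.
From mathcomp Require Import all_classical all_reals all_analysis.
Set Implicit Arguments. Unset Strict Implicit. Unset Printing Implicit Defensive.
Import Order.TTheory GRing.Theory Num.Theory.
Import numFieldNormedType.Exports.
Local Open Scope ring_scope.

Section ConvexAnalysis.
Context {R : realType} {X : normedModType R}.

Definition is_dual (p : X -> R) : Prop :=
  (forall (a : R) (x y : X), p (a *: x + y) = a * p x + p y) /\ continuous p.

Definition edom (f : X -> \bar R) : set X := [set x | f x != +oo%E].

(* f : X -> R U {+oo} proper *)
Definition proper_fun (f : X -> \bar R) : Prop :=
  (forall x, f x != -oo%E) /\ (exists x, f x != +oo%E).

Definition convex_fun (f : X -> \bar R) : Prop :=
  forall (x y : X) (t : R), 0 < t < 1 ->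
    (f (t *: x + (1 - t) *: y)%R <= t%:E * f x + (1 - t)%:E * f y)%E.

Definition subdiff (f : X -> \bar R) (x0 : X) (p : X -> R) : Prop :=
  is_dual p /\ x0 \in edom f /\
  forall x : X, (f x >= f x0 + (p (x - x0)%R)%:E)%E.

Definition dom_subdiff (f : X -> \bar R) : set X :=
  [set x | exists p, subdiff f x p].

End ConvexAnalysis.

From HB Require Import structures.
From mathcomp Require Import all_boot all_order all_algebra.
From mathcomp Require Import all_classical all_reals all_analysis.
From mathcomp Require Import ring lra.
Set Implicit Arguments. Unset Strict Implicit. Unset Printing Implicit Defensive.
Import Order.TTheory GRing.Theory Num.Theory.
Import numFieldNormedType.Exports.
Local Open Scope ring_scope.
Local Open Scope classical_set_scope.

(* Suppose [f x1 < f 0].  Adding to [f] the convex Lipschitz radial penalty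
   [k x = mu |x| + M (|x| - |x1|)^+], where [M] comes from an affine-in-norm
   minorant of [f], makes [f + k] bounded below while keeping
   [f x1 + k x1 < f 0 + k 0].  Ekeland's variational principle (with constant
   [mu / 2], proved by Zorn's lemma on the Brondsted order) gives [z != 0]
   minimizing [f + g] with [g = k + (mu / 2) |. - z|].  Since [g] is convex and
   continuous, a Hahn-Banach sandwich argument gives [p] in [\partial f(z)] with
   [-p] in [\partial g(z)]; evaluating the latter at [0] gives
   [p z <= k 0 - k z + (mu / 2) |z| <= - (mu / 2) |z| < 0], contradicting the
   hypothesis.  Hence [f 0 <= f x] for every [x]. *)

Section infimum.
Variable R : realType.
Implicit Types (E : set R) (a c : R).

Lemma le_infD E1 E2 c : E1 !=set0 -> E2 !=set0 ->
  (forall e1 e2, E1 e1 -> E2 e2 -> c <= e1 + e2) -> c <= inf E1 + inf E2.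
Proof.
move=> E1n0 E2n0 le_c.
suff : c - inf E2 <= inf E1 by lra.
apply: lb_le_inf => // e1 E1e1.
suff : c - e1 <= inf E2 by lra.
by apply: lb_le_inf => // e2 E2e2; have := le_c _ _ E1e1 E2e2; lra.
Qed.

Lemma infZ E a : 0 < a -> E !=set0 -> has_lbound E ->
  inf [set a * e | e in E] = a * inf E.
Proof.
move=> a0 En0 [b lbE]; apply/le_anti/andP; split.
- rewrite mulrC -ler_pdivrMr //; apply: lb_le_inf => // e Ee.
  rewrite ler_pdivrMr // mulrC; apply: ge_inf; last by exists e.
  by exists (a * b) => _ [y Ey <-]; rewrite ler_pM2l // lbE.
- have [e Ee] := En0; apply: lb_le_inf; first by exists (a * e), e.
  by move=> _ [y Ey <-]; rewrite ler_pM2l //; apply: ge_inf => //; exists b.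
Qed.

End infimum.

Section sublinear.
Variables (R : realType) (V : lmodType R).
Implicit Types (p q : V -> R) (x y : V).

Definition sublinear p :=
  (forall x y, p (x + y) <= p x + p y) /\
  (forall (a : R) x, 0 < a -> p (a *: x) = a * p x).

Definition linear_functional (L : V -> R) :=
  forall (a : R) x y, L (a *: x + y) = a * L x + L y.

Lemma sublinear0 p : sublinear p -> p 0 = 0.
Proof.
by move=> [_ hom]; have := hom 2 0 (ltr0Sn _ 1); rewrite scaler0; lra.
Qed.

Lemma sublinearN_ge p x : sublinear p -> - p (- x) <= p x.
Proof. by move=> hp; have := hp.1 x (- x); rewrite addrN sublinear0 //; lra. Qed.

Lemma sublinearZ p (a : R) x : sublinear p -> 0 <= a -> p (a *: x) = a * p x.
Proof.
move=> hp; rewrite le_eqVlt => /predU1P[<-|a0]; last exact: hp.2.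
by rewrite scale0r mul0r sublinear0.
Qed.

Lemma sublinear_odd_linear p : sublinear p ->
  (forall x, p (- x) = - p x) -> linear_functional p.
Proof.
move=> hp pN a x y.
have pD x' y' : p (x' + y') = p x' + p y'.
  apply/le_anti; rewrite hp.1 /=.
  by have := hp.1 (x' + y') (- y'); rewrite addrK pN; lra.
rewrite pD; congr (_ + _); have [a0|a0] := leP 0 a; first exact: sublinearZ.
by rewrite -[a]opprK scaleNr pN sublinearZ ?mulNr // oppr_ge0 ltW.
Qed.

Section linear_functional.
Variables (L : V -> R) (L_lin : linear_functional L).

Lemma linear_functional0 : L 0 = 0.
Proof. by have := L_lin 1 0 0; rewrite scale1r addr0 mul1r; lra. Qed.

Lemma linear_functionalN x : L (- x) = - L x.
Proof.
by have := L_lin (-1) x 0; rewrite scaleN1r addr0 linear_functional0 addr0 mulN1r.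
Qed.

Lemma linear_functionalB x y : L (x - y) = L x - L y.
Proof. by have := L_lin 1 x (- y); rewrite scale1r mul1r linear_functionalN. Qed.

End linear_functional.

End sublinear.

Section hahn_banach.
Variables (R : realType) (V : lmodType R).
Implicit Types (p q : V -> R) (x y : V).

Section shift.
Variables (p : V -> R) (x0 : V).
Hypothesis p_sub : sublinear p.

Let S x := [set p (x + t *: x0) - t * p x0 | t in [set t : R | 0 <= t]].

Let S_lb x e : S x e -> - p (- x) <= e.
Proof.
move=> [t t0 <-]; have := p_sub.1 (x + t *: x0) (- x).
by rewrite addrAC subrr add0r sublinearZ //; lra.
Qed.

Let S_n0 x : S x !=set0.
Proof. by exists (p (x + 0 *: x0) - 0 * p x0), 0 => /=. Qed.

Let S_inf_le x t : 0 <= t -> inf (S x) <= p (x + t *: x0) - t * p x0.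
Proof. by move=> t0; apply: ge_inf; [exists (- p (- x)) => e /S_lb | exists t]. Qed.

Lemma sublinear_inf_shift : sublinear (fun x => inf (S x)).
Proof.
split=> [x y|a x a0].
- apply: le_infD => // _ _ [t1 t10 <-] [t2 t20 <-].
  apply: le_trans (S_inf_le (x + y) (addr_ge0 t10 t20)) _.
  rewrite scalerDl addrACA mulrDl.
  by have := p_sub.1 (x + t1 *: x0) (y + t2 *: x0); lra.
- rewrite -infZ //; last by exists (- p (- x)) => e /S_lb.
  congr inf; apply/seteqP; split=> y.
  + move=> [t t0 <-]; have ta : a * (t / a) = t.
      by rewrite mulrCA divff ?gt_eqF // mulr1.
    exists (p (x + (t / a) *: x0) - (t / a) * p x0).
      by exists (t / a) => //; apply: divr_ge0 => //; exact: ltW.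
    by rewrite mulrBr -(p_sub.2 a) // scalerDr scalerA ta mulrA ta.
  + move=> [_ [t t0 <-] <-]; exists (a * t); first by apply: mulr_ge0 => //; exact: ltW.
    by rewrite -scalerA -scalerDr p_sub.2 // mulrBr mulrA.
Qed.

Lemma inf_shift_le x : inf (S x) <= p x.
Proof. by have := S_inf_le x (lexx 0); rewrite scale0r addr0 mul0r subr0. Qed.

Lemma inf_shift_opp : inf (S (- x0)) <= - p x0.
Proof.
have := S_inf_le (- x0) ler01.
by rewrite scale1r addNr sublinear0 // mul1r sub0r.
Qed.

End shift.

Lemma minimal_sublinear_odd p : sublinear p ->
  (forall p', sublinear p' -> (forall x, p' x <= p x) -> forall x, p x <= p' x) ->
  forall x, p (- x) = - p x.
Proof.
move=> p_sub p_min x; apply/le_anti/andP; split; last first.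
  by have := sublinearN_ge x p_sub; lra.
apply: le_trans (inf_shift_opp x p_sub).
exact: p_min (sublinear_inf_shift x p_sub) (inf_shift_le x p_sub) (- x).
Qed.

Lemma sublinear_inf_chain q (A : set (V -> R)) : A !=set0 ->
  (forall p, A p -> sublinear p /\ forall x, p x <= q x) ->
  (forall p1 p2, A p1 -> A p2 -> (forall x, p1 x <= p2 x) \/ (forall x, p2 x <= p1 x)) ->
  sublinear (fun x => inf [set p x | p in A]).
Proof.
move=> [p0 Ap0] hA Atot.
have lb x e : [set p x | p in A] e -> - q (- x) <= e.
  move=> [p Ap <-]; have [p_sub le_pq] := hA p Ap.
  by have := sublinearN_ge x p_sub; have := le_pq (- x); lra.
have n0 x : [set p x | p in A] !=set0 by exists (p0 x), p0.
have inf_le x p : A p -> inf [set p x | p in A] <= p x.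
  by move=> Ap; apply: ge_inf; [exists (- q (- x)) => e /lb | exists p].
split=> [x y|a x a0].
- apply: le_infD => // _ _ [p1 Ap1 <-] [p2 Ap2 <-].
  have [sub1 _] := hA p1 Ap1; have [sub2 _] := hA p2 Ap2.
  have [le12|le21] := Atot _ _ Ap1 Ap2.
  + apply: le_trans (inf_le _ _ Ap1) _.
    by have := sub1.1 x y; have := le12 y; lra.
  + apply: le_trans (inf_le _ _ Ap2) _.
    by have := sub2.1 x y; have := le21 x; lra.
- rewrite -infZ //; last by exists (- q (- x)) => e /lb.
  congr inf; apply/seteqP; split=> _ [p Ap <-].
  + by exists (p x); [exists p | rewrite (hA p Ap).1.2].
  + by case: Ap => p' Ap' <-; exists p' => //; rewrite (hA p' Ap').1.2.
Qed.

Theorem hahn_banach q : sublinear q ->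
  exists L, linear_functional L /\ forall x, L x <= q x.
Proof.
move=> q_sub.
pose T := {p : V -> R | sublinear p /\ forall x, p x <= q x}.
pose below (p1 p2 : T) := `[< forall x, sval p2 x <= sval p1 x >].
have [t t_max] : exists t, premaximal below t.
  pose tq : T := exist _ q (conj q_sub (fun x => lexx _)).
  apply: (ZL_preorder tq).
  - by move=> t; apply/asboolP => x.
  - move=> r s t /asboolP le_sr /asboolP le_ts; apply/asboolP => x.
    exact: le_trans (le_ts x) (le_sr x).
  - move=> A Atot; have [[p0 Ap0]|A0] := pselect (A !=set0); last first.
      by exists tq => s As; exfalso; apply: A0; exists s.
    pose m x := inf [set p x | p in sval @` A].
    have m_sub : sublinear m.
      apply: (sublinear_inf_chain (q := q)); first by exists (sval p0), p0.
        by move=> _ [p _ <-]; exact: (svalP p).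
      move=> _ _ [p1 Ap1 <-] [p2 Ap2 <-].
      by have [/asboolP|/asboolP] := Atot _ _ Ap1 Ap2; [right|left].
    have m_le (p : T) x : A p -> m x <= sval p x.
      move=> Ap; apply: ge_inf; last by exists (sval p); [exists p|].
      exists (- q (- x)) => _ [_ [p' _ <-] <-]; have [p'_sub p'_q] := svalP p'.
      by have := sublinearN_ge x p'_sub; have := p'_q (- x); lra.
    have m_q x : m x <= q x by apply: le_trans (m_le _ _ Ap0) (proj2 (svalP p0) x).
    by exists (exist _ m (conj m_sub m_q)) => s As; apply/asboolP => x; exact: m_le.
have [t_sub t_q] := svalP t.
exists (sval t); split=> //; apply: sublinear_odd_linear => //.
apply: minimal_sublinear_odd => // p' p'_sub le_p't x.
have p'_q y : p' y <= q y := le_trans (le_p't y) (t_q y).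
by have /asboolP := t_max (exist _ p' (conj p'_sub p'_q)) (asboolT le_p't); apply.
Qed.

End hahn_banach.

Section convex_real.
Variables (R : realType) (V : normedModType R).
Implicit Types (h : V -> R) (c : R) (a u v : V).

Definition convex_real h := forall (s : R) u v, 0 < s < 1 ->
  h (s *: u + (1 - s) *: v) <= s * h u + (1 - s) * h v.

Lemma convex_realD h1 h2 : convex_real h1 -> convex_real h2 ->
  convex_real (fun x => h1 x + h2 x).
Proof.
move=> h1_cvx h2_cvx s u v s01.
by have := h1_cvx s u v s01; have := h2_cvx s u v s01; lra.
Qed.

Lemma norm_convex (s : R) u v : 0 < s < 1 ->
  `|s *: u + (1 - s) *: v| <= s * `|u| + (1 - s) * `|v|.
Proof.
move=> /andP[s_gt0 s_lt1]; apply: le_trans (ler_normD _ _) _.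
by rewrite !normrZ !ger0_norm // ?subr_ge0 ltW.
Qed.

Lemma convex_dist a c : 0 <= c -> convex_real (fun x => c * `|x - a|).
Proof.
move=> c_ge0 s u v s01.
have -> : s *: u + (1 - s) *: v - a = s *: (u - a) + (1 - s) *: (v - a).
  by rewrite !scalerBr addrACA -opprD -scalerDl subrKC scale1r.
by rewrite mulrCA [(1 - s) * _]mulrCA -mulrDr ler_wpM2l // norm_convex.
Qed.

End convex_real.

Section semicontinuity.
Variable R : realType.
Local Open Scope ereal_scope.

Lemma ereal_gt_fin_gap (y : \bar R) (b : R) : b%:E < y ->
  exists2 e : R, (0 < e)%R & (b + e)%:E < y.
Proof.
case: y => [r| |] //= => [|_]; last by exists 1%R => //; exact: ltey.
rewrite lte_fin => b_lt_r; exists ((r - b) / 2)%R; first by rewrite divr_gt0 ?subr_gt0.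
by rewrite lte_fin; lra.
Qed.

Lemma lsc_cvg_le (T : topologicalType) (h : T -> \bar R) (u : nat -> T) t (b : R) :
  lower_semicontinuous h -> u @ \oo --> t ->
  (forall e : R, (0 < e)%R -> \forall n \near \oo, h (u n) <= (b + e)%:E) ->
  h t <= b%:E.
Proof.
move=> h_lsc u_t h_le; rewrite leNgt; apply/negP => /ereal_gt_fin_gap[e e_gt0].
move=> /h_lsc[V Vt h_gt].
have Vu : \forall n \near \oo, V (u n) := u_t _ Vt.
have [n [Vun le_hun]] := filter_ex (filterI Vu (h_le e e_gt0)).
by have := lt_le_trans (h_gt _ Vun) le_hun; rewrite ltxx.
Qed.

Lemma lsc_addr_continuous (T : topologicalType) (f : T -> \bar R) (k : T -> R) :
  lower_semicontinuous f -> continuous k ->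
  lower_semicontinuous (fun x => f x + (k x)%:E).
Proof.
move=> f_lsc k_cont x a.
rewrite -lte_subel_addr // -EFinB => /ereal_gt_fin_gap[e e_gt0 /f_lsc[V Vx f_gt]].
exists (V `&` [set y | `|k x - k y| < e]%R).
  by apply: filterI => //; exact: (cvgr_dist_lt _ _ (k_cont x) _ e_gt0).
move=> y [/f_gt + /= ky]; rewrite -lte_subel_addr // -EFinB; apply: le_lt_trans.
by rewrite lee_fin; move: ky; rewrite ltr_norml; lra.
Qed.

End semicontinuity.

Section lipschitz.
Variables (R : realType) (X : normedModType R).
Implicit Types (k : X -> R) (C : R).

Lemma lipschitzP k C :
  C.-lipschitz k <-> forall x y, k x - k y <= C * `|x - y|.
Proof.
split=> [k_lip x y|k_le [x y] _ /=].
  by apply: le_trans (ler_norm _) _; exact: (k_lip (x, y) (conj I I)).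
by rewrite ler_norml; have := k_le x y; have := k_le y x; rewrite distrC; lra.
Qed.

Lemma lipschitz_continuous k C : C.-lipschitz k -> continuous k.
Proof.
move=> k_lip x; apply/cvgrPdist_lt => e e_gt0.
have C1_gt0 : 0 < `|C| + 1 by rewrite ltr_wpDl.
near=> y; have : `|x - y| < e / (`|C| + 1).
  by near: y; apply: (cvgr_dist_lt _ _ cvg_id); rewrite divr_gt0.
have kxy : `|k x - k y| <= C * `|x - y| := k_lip (x, y) (conj I I).
rewrite ltr_pdivlMr // => xy_lt; apply: le_lt_trans kxy (le_lt_trans _ xy_lt).
by rewrite mulrC ler_wpM2l // ler_wpDr // ler_norm.
Unshelve. all: by end_near.
Qed.

Lemma lipschitzD k1 k2 C1 C2 : C1.-lipschitz k1 -> C2.-lipschitz k2 ->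
  (C1 + C2).-lipschitz (fun x => k1 x + k2 x).
Proof.
move=> /lipschitzP k1_le /lipschitzP k2_le; apply/lipschitzP => x y.
by have := k1_le x y; have := k2_le x y; lra.
Qed.

Lemma dist_lipschitz (a : X) C : 0 <= C -> C.-lipschitz (fun x => C * `|x - a|).
Proof.
move=> C_ge0; apply/lipschitzP => x y; rewrite -mulrBr ler_wpM2l //.
apply: le_trans (ler_norm _) (le_trans (ler_dist_dist _ _) _).
by rewrite opprB addrA subrK.
Qed.

End lipschitz.

Section sandwich.
Variables (R : realType) (V : normedModType R).
Variables (D : set V) (phi rho : V -> R) (C : R).
Hypotheses (D0 : D 0) (phi0 : phi 0 = 0) (rho0 : rho 0 = 0).
Hypothesis D_convex : forall (s : R) u v, 0 < s < 1 -> D u -> D v ->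
  D (s *: u + (1 - s) *: v).
Hypothesis phi_convex : forall (s : R) u v, 0 < s < 1 -> D u -> D v ->
  phi (s *: u + (1 - s) *: v) <= s * phi u + (1 - s) * phi v.
Hypotheses (rho_convex : convex_real rho) (rho_lipschitz : C.-lipschitz rho).
Hypothesis rho_phi : forall u, D u -> - rho u <= phi u.

(* [inf (E h)] is the sublinear hull of the infimal convolution of [phi] and
   [rho \o -%R]; it lies below both, hence so does any linear form below it. *)
Let E (h : V) : set R :=
  [set e | exists t u, [/\ 0 < t, D u & e = t * (phi u + rho (u - t^-1 *: h))]].

Let E_lb h e : E h e -> - (C * `|h|) <= e.
Proof.
move=> [t [u [t0 Du ->]]].
have := (lipschitzP rho C).1 rho_lipschitz u (u - t^-1 *: h).
rewrite subKr normrZ gtr0_norm ?invr_gt0 // => rho_le.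
have -> : - (C * `|h|) = t * (- (C * (t^-1 * `|h|))) by field; rewrite gt_eqF.
by rewrite ler_pM2l //; have := rho_phi Du; lra.
Qed.

Let E_n0 h : E h !=set0.
Proof. by exists (1 * (phi 0 + rho (0 - 1^-1 *: h))), 1, 0; split. Qed.

Let E_hlb h : has_lbound (E h).
Proof. by exists (- (C * `|h|)) => e /E_lb. Qed.

Let E_add h1 h2 e1 e2 : E h1 e1 -> E h2 e2 -> exists2 e, E (h1 + h2) e & e <= e1 + e2.
Proof.
move=> [t1 [u1 [t1_gt0 Du1 ->]]] [t2 [u2 [t2_gt0 Du2 ->]]].
pose t := t1 + t2; have t_gt0 : 0 < t by rewrite addr_gt0.
pose s := t1 / t; have s01 : 0 < s < 1.
  by rewrite divr_gt0 //= ltr_pdivrMr // mul1r ltrDl.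
have ts : t * s = t1 by rewrite /s mulrCA divff ?gt_eqF // mulr1.
have ts' : t * (1 - s) = t2 by rewrite mulrBr ts mulr1 /t addrAC subrr add0r.
pose u := s *: u1 + (1 - s) *: u2.
exists (t * (phi u + rho (u - t^-1 *: (h1 + h2)))); first by exists t, u; split=> //; exact: D_convex.
have -> : u - t^-1 *: (h1 + h2) =
    s *: (u1 - t1^-1 *: h1) + (1 - s) *: (u2 - t2^-1 *: h2).
  have st1 : s / t1 = t^-1 by rewrite /s; field; rewrite !gt_eqF.
  have st2 : (1 - s) / t2 = t^-1 by rewrite /s /t; field; rewrite !gt_eqF.
  by rewrite !scalerBr !scalerA st1 st2 scalerDr addrACA opprD.
have := phi_convex s01 Du1 Du2; rewrite -/u => phi_u.
have := rho_convex (u1 - t1^-1 *: h1) (u2 - t2^-1 *: h2) s01 => rho_u.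
set A1 := phi u1 + _; set A2 := phi u2 + _.
set w := s *: (u1 - _) + _.
suff : t * (phi u + rho w) <= t * (s * A1 + (1 - s) * A2).
  by move/le_trans; apply; rewrite mulrDr (mulrA t s) (mulrA t (1 - s)) ts ts'.
by rewrite ler_pM2l // /A1 /A2; lra.
Qed.

Let E_scale a h : 0 < a -> E (a *: h) = [set a * e | e in E h].
Proof.
move=> a_gt0; apply/seteqP; split=> y.
- move=> [t [u [t_gt0 Du ->]]]; exists (t / a * (phi u + rho (u - (t / a)^-1 *: h))).
    by exists (t / a), u; split=> //; exact: divr_gt0.
  rewrite invf_div scalerA [t^-1 * a]mulrC mulrA.
  by rewrite [a * _]mulrCA divff ?gt_eqF // mulr1.
- move=> [_ [t [u [t_gt0 Du ->]]] <-]; exists (a * t), u; split=> //.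
    exact: mulr_gt0.
  by rewrite mulrA invfM scalerA [_ * _ * a]mulrAC mulVf ?gt_eqF // mul1r.
Qed.

Let Q_sublinear : sublinear (fun h => inf (E h)).
Proof.
split=> [h1 h2|a h a_gt0].
- apply: le_infD => // e1 e2 /E_add/[apply] -[e Ee le_e].
  exact: le_trans (ge_inf (E_hlb _) Ee) le_e.
- by rewrite E_scale // infZ.
Qed.

Theorem sandwich : exists L : V -> R, [/\ linear_functional L,
  forall h, D h -> L h <= phi h & forall h, L h <= rho (- h)].
Proof.
have [L [L_lin L_Q]] := hahn_banach Q_sublinear.
exists L; split=> // h => [Dh|]; apply: le_trans (L_Q h) _; apply: ge_inf => //.
- by exists 1, h; split; rewrite ?mul1r ?invr1 ?scale1r ?subrr ?rho0 ?addr0.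
- by exists 1, 0; split; rewrite ?mul1r ?invr1 ?scale1r ?sub0r ?phi0 ?add0r.
Qed.

End sandwich.

Section ekeland.
Variables (R : realType) (X : completeNormedModType R).
Variables (G : X -> \bar R) (lam B : R) (x0 : X).
Hypotheses (lam_gt0 : 0 < lam) (G_lsc : lower_semicontinuous G).
Hypotheses (G_ge : forall x, (B%:E <= G x)%E) (Gx0 : G x0 \is a fin_num).

Let lam_dist_triangle (x y z : X) :
  lam * `|x - z| <= lam * `|x - y| + lam * `|y - z|.
Proof. by rewrite -mulrDr ler_pM2l // ler_distD. Qed.

Let g0 := fine (G x0).
Let S x := (G x + (lam * `|x - x0|)%:E <= G x0)%E.

Let S_fin x : S x -> G x = (fine (G x))%:E.
Proof. by rewrite /S -(fineK Gx0); case: (G x) (G_ge x). Qed.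

Let SE x r : G x = r%:E -> S x = (r + lam * `|x - x0| <= g0).
Proof. by move=> Gx; rewrite /S Gx -(fineK Gx0) -EFinD lee_fin. Qed.

Let T := {x : X | S x}.
Let g (t : T) : R := fine (G (sval t)).

Let gE (t : T) : G (sval t) = (g t)%:E.
Proof. exact: S_fin (svalP t). Qed.

Let g_le (t : T) : g t + lam * `|sval t - x0| <= g0.
Proof. by rewrite -(SE (gE t)); exact: svalP t. Qed.

Let below (s t : T) : bool := g t + lam * `|sval t - sval s| <= g s.

Let S_x0 : S x0.
Proof. by rewrite /S subrr normr0 mulr0 adde0. Qed.

Let t0 : T := exist _ x0 S_x0.

Let eps (n : nat) : R := n.+1%:R^-1.

Let eps_gt0 n : 0 < eps n.
Proof. by rewrite invr_gt0. Qed.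

Let eps_lt e : 0 < e -> \forall n \near \oo, eps n < e.
Proof. by move=> e_gt0; exact: (near_infty_natSinv_lt (PosNum e_gt0)). Qed.

Let chain_minimizing (A : set T) : total_on A below -> A !=set0 ->
  exists u : nat -> T, forall n, A (u n) /\
    forall s, A s -> g (u n) + lam * `|sval (u n) - sval s| <= g s + 2 * eps n.
Proof.
move=> Atot [p0 Ap0]; pose m := inf [set g s | s in A].
have A_lb : has_lbound [set g s | s in A] by exists B => _ [s _ <-]; rewrite -lee_fin -gE.
have m_le s : A s -> m <= g s by move=> As; apply: ge_inf => //; exists s.
have [u u_spec] : {u : nat -> T & forall n, A (u n) /\ g (u n) < m + eps n}.
  apply: (@choice _ _ (fun n s => A s /\ g s < m + eps n)) => n.
  have : m < m + eps n by rewrite ltrDl.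
  move=> /(inf_lt _)[]; first by exists (g p0), p0.
  by move=> _ [s As <-] gs_lt; exists s.
exists u => n; have [Aun gun_lt] := u_spec n; split=> // s As.
have := lt_le_trans gun_lt (lerD (m_le s As) (lexx (eps n))); have := eps_gt0 n.
have [|] := Atot _ _ As Aun; rewrite /below; last rewrite distrC; lra.
Qed.

Let chain_ub (A : set T) : total_on A below -> exists t, forall s, A s -> below s t.
Proof.
move=> Atot; have [A_n0|A0] := pselect (A !=set0); last first.
  by exists t0 => s As; exfalso; apply: A0; exists s.
have [u u_spec] := chain_minimizing Atot A_n0; have [p0 Ap0] := A_n0.
pose x n := sval (u n).
have x_cvg : cvg (x @ \oo).
  apply: cauchy_cvg; apply: cauchy_exP => e e_gt0.
  have [N _ epsN] := eps_lt (divr_gt0 (mulr_gt0 e_gt0 lam_gt0) (ltr0Sn _ 1)).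
  exists (x N), N => // n /= Nn.
  rewrite -ball_normE /= -(ltr_pM2l lam_gt0) [lam * e]mulrC.
  have epsn : eps n <= eps N by rewrite lef_pV2 ?posrE // ler_nat.
  have := (u_spec n).2 _ (u_spec N).1; rewrite distrC.
  have := (u_spec N).2 _ (u_spec n).1.
  by have := epsN N (leqnn N); lra.
have x_t : x @ \oo --> lim (x @ \oo) := x_cvg.
set t := lim (x @ \oo) in x_t.
have t_le s : A s -> (G t + (lam * `|t - sval s|)%:E <= (g s)%:E)%E.
  move=> As; apply: (@lsc_cvg_le _ _ (fun y => G y + (lam * `|y - sval s|)%:E)%E _ _ _ _ x_t).
    exact: lsc_addr_continuous G_lsc (lipschitz_continuous (dist_lipschitz _ (ltW lam_gt0))).
  move=> e e_gt0; near=> n; rewrite gE -EFinD lee_fin.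
  have : eps n < e / 2 by near: n; apply: eps_lt; rewrite divr_gt0.
  by have := (u_spec n).2 s As; lra.
have St : S t.
  have := t_le _ Ap0; have := g_le p0; have := lam_dist_triangle t (sval p0) x0.
  case Gt: (G t) (G_ge t) => [r| |] //= _; rewrite (SE Gt) -EFinD lee_fin; lra.
exists (exist _ t St) => s As; rewrite /below /g /=.
by have := t_le _ As; rewrite (S_fin St) -EFinD lee_fin.
Unshelve. all: by end_near.
Qed.

Theorem ekeland : exists z, (G z <= G x0)%E /\
  forall x, (G z <= G x + (lam * `|x - z|)%:E)%E.
Proof.
have [z z_max] : exists z, premaximal below z.
  apply: (ZL_preorder t0) => [t|r s t|]; last exact: chain_ub.
    by rewrite /= /below subrr normr0 mulr0 addr0.
  by rewrite /= /below => le_rs le_st; have := lam_dist_triangle (sval t) (sval s) (sval r); lra.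
exists (sval z); split.
  rewrite gE -(fineK Gx0) lee_fin -/g0; have := g_le z.
  by have := mulr_ge0 (ltW lam_gt0) (normr_ge0 (sval z - x0)); lra.
move=> x; rewrite leNgt; apply/negP; rewrite gE.
case Gx: (G x) (G_ge x) => [r| |] //= _; rewrite -?EFinD lte_fin => lt_x.
have Sx : S x.
  by rewrite (SE Gx); have := g_le z; have := lam_dist_triangle x (sval z) x0; lra.
have gx : g (exist _ x Sx) = r by rewrite /g /= Gx.
have /z_max : below z (exist _ x Sx) by rewrite /below gx /=; lra.
rewrite /below gx /= distrC.
by have := mulr_ge0 (ltW lam_gt0) (normr_ge0 (x - sval z)); lra.
Qed.

End ekeland.

Section norm_penalty.
Variables (R : realType) (X : normedModType R).
Variables (mu K r : R).
Hypotheses (mu_ge0 : 0 <= mu) (K_ge0 : 0 <= K).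

Definition norm_penalty (x : X) : R := mu * `|x| + K * Num.max 0 (`|x| - r).

Let max0_ge0 (y : R) : 0 <= Num.max 0 y.
Proof. by rewrite le_max lexx. Qed.

Let max0_ge (y : R) : y <= Num.max 0 y.
Proof. by rewrite le_max lexx orbT. Qed.

Lemma norm_penalty_convex : convex_real norm_penalty.
Proof.
move=> s u v s01; have /andP[s_gt0 s_lt1] := s01.
have s'_ge0 : 0 <= 1 - s by rewrite subr_ge0 ltW.
have n_le := norm_convex u v s01.
have max_le : Num.max 0 (`|s *: u + (1 - s) *: v| - r) <=
    s * Num.max 0 (`|u| - r) + (1 - s) * Num.max 0 (`|v| - r).
  have := ler_wpM2l (ltW s_gt0) (max0_ge (`|u| - r)).
  have := ler_wpM2l (ltW s_gt0) (max0_ge0 (`|u| - r)).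
  have := ler_wpM2l s'_ge0 (max0_ge (`|v| - r)).
  have := ler_wpM2l s'_ge0 (max0_ge0 (`|v| - r)).
  rewrite ge_max; lra.
have := ler_wpM2l mu_ge0 n_le; have := ler_wpM2l K_ge0 max_le.
rewrite /norm_penalty; lra.
Qed.

Lemma norm_penalty_lipschitz : (mu + K).-lipschitz norm_penalty.
Proof.
apply/lipschitzP => x y; have d_ge := lerB_dist x y.
have max_le : Num.max 0 (`|x| - r) <= Num.max 0 (`|y| - r) + `|x - y|.
  rewrite ge_max; have := max0_ge (`|y| - r); have := max0_ge0 (`|y| - r).
  by have := normr_ge0 (x - y); move=> *; apply/andP; split; lra.
have := ler_wpM2l mu_ge0 d_ge; have := ler_wpM2l K_ge0 max_le.
rewrite /norm_penalty; lra.
Qed.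

Lemma norm_penalty_ge_mu x : mu * `|x| <= norm_penalty x.
Proof. by rewrite lerDl mulr_ge0. Qed.

Lemma norm_penalty_ge_K x : K * `|x| - K * r <= norm_penalty x.
Proof.
have := ler_wpM2l K_ge0 (max0_ge (`|x| - r)); have := mulr_ge0 mu_ge0 (normr_ge0 x).
rewrite /norm_penalty; lra.
Qed.

Lemma norm_penalty0 : 0 <= r -> norm_penalty 0 = 0.
Proof.
by move=> r_ge0; rewrite /norm_penalty normr0 mulr0 sub0r max_l ?oppr_le0 // mulr0 addr0.
Qed.

Lemma norm_penalty_sphere x : `|x| = r -> norm_penalty x = mu * r.
Proof. by move=> xr; rewrite /norm_penalty xr subrr maxxx mulr0 addr0. Qed.

End norm_penalty.

Section convex_fun.
Variables (R : realType) (X : normedModType R).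

Lemma convex_fun_edom (f : X -> \bar R) (s : R) x y :
  (forall x, f x != -oo%E) -> convex_fun f -> 0 < s < 1 ->
  f x != +oo%E -> f y != +oo%E ->
  f (s *: x + (1 - s) *: y) != +oo%E /\
  fine (f (s *: x + (1 - s) *: y)) <= s * fine (f x) + (1 - s) * fine (f y).
Proof.
move=> f_fin f_cvx s01 fx fy.
have fE w : f w != +oo%E -> f w = (fine (f w))%:E by move=> ?; rewrite fineK // fin_numE f_fin.
have := f_cvx x y s s01; rewrite (fE _ fx) (fE _ fy) -!EFinM -EFinD.
by case: (f (s *: x + (1 - s) *: y)) (f_fin (s *: x + (1 - s) *: y)) => //= v _; rewrite lee_fin.
Qed.

(* Lower semicontinuity gives [f > c1 - 1] on a ball [B(x1, d)]; convexity along
   the segment from [x1] to a far point [x] transfers this to [x]. *)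
Lemma convex_lsc_minorant (f : X -> \bar R) x1 (c1 : R) :
  (forall x, f x != -oo%E) -> convex_fun f -> lower_semicontinuous f ->
  f x1 = c1%:E -> exists2 M, 0 <= M & forall x, ((c1 - 1 - M * `|x - x1|)%:E <= f x)%E.
Proof.
move=> f_fin f_cvx f_lsc fx1.
have /f_lsc[V /nbhs_ballP[d d_gt0 dV] f_gt] : ((c1 - 1)%:E < f x1)%E.
  by rewrite fx1 lte_fin; lra.
rewrite /= in d_gt0; exists (2 / d); first by rewrite divr_ge0 // ltW.
move=> x; set D := `|x - x1|; have MD_ge0 : 0 <= 2 / d * D := mulr_ge0 (divr_ge0 (ler0n _ 2) (ltW d_gt0)) (normr_ge0 _).
have [D_lt|D_ge] := ltP D d.
  apply: le_trans (ltW (f_gt x _)); first by rewrite lee_fin; lra.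
  by apply: dV; rewrite -ball_normE /= distrC.
have D_gt0 : 0 < D by apply: lt_le_trans D_ge.
pose th := d / (2 * D); have th_gt0 : 0 < th by rewrite divr_gt0 // mulr_gt0.
have th01 : 0 < th < 1 by rewrite th_gt0 /th ltr_pdivrMr ?mulr_gt0 // mul1r /=; lra.
have th_inv : 2 / d * D * th = 1 by rewrite /th; field; rewrite !gt_eqF.
have y_in : V (th *: x + (1 - th) *: x1).
  apply: dV; rewrite -ball_normE /= distrC.
  have -> : th *: x + (1 - th) *: x1 - x1 = th *: (x - x1).
    by rewrite scalerBl scale1r scalerBr addrCA addrAC subrr add0r.
  have thD : th * D = d / 2 by rewrite /th; field; rewrite gt_eqF.
  by rewrite normrZ gtr0_norm // -/D thD; lra.
have := lt_le_trans (f_gt _ y_in) (f_cvx x x1 th th01); rewrite fx1.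
case: (f x) (f_fin x) => [v| |] //= _; last by rewrite leey.
rewrite -!EFinM -EFinD lte_fin lee_fin => lt_v.
nra.
Qed.

End convex_fun.

Section subdifferential.
Variables (R : realType) (X : normedModType R).

Lemma subdiff_at_minimizer (f : X -> \bar R) (g : X -> R) (C : R) z :
  (forall x, f x != -oo%E) -> convex_fun f -> f z \is a fin_num ->
  convex_real g -> C.-lipschitz g ->
  (forall x, (f z + (g z)%:E <= f x + (g x)%:E)%E) ->
  exists p, subdiff f z p /\ forall x, g z - p (x - z) <= g x.
Proof.
move=> f_fin f_cvx fz_fin g_cvx g_lip z_min.
pose D u := f (z + u) != +oo%E.
have fE u : D u -> f (z + u) = (fine (f (z + u)))%:E.
  by move=> Du; rewrite fineK // fin_numE f_fin.
pose phi u := fine (f (z + u)) - fine (f z).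
pose rho u := g (z + u) - g z.
have shift (s : R) u v : z + (s *: u + (1 - s) *: v) = s *: (z + u) + (1 - s) *: (z + v).
  by rewrite !scalerDr addrACA -scalerDl subrKC scale1r.
have D0 : D 0 by move: fz_fin; rewrite /D addr0 fin_numE => /andP[].
have D_convex (s : R) u v : 0 < s < 1 -> D u -> D v -> D (s *: u + (1 - s) *: v).
  by move=> s01 Du Dv; rewrite /D shift; exact: (convex_fun_edom f_fin f_cvx s01 Du Dv).1.
have phi_convex (s : R) u v : 0 < s < 1 -> D u -> D v ->
    phi (s *: u + (1 - s) *: v) <= s * phi u + (1 - s) * phi v.
  move=> s01 Du Dv; have := (convex_fun_edom f_fin f_cvx s01 Du Dv).2.
  by rewrite -shift /phi; lra.
have rho_convex : convex_real rho.
  by move=> s u v s01; rewrite /rho shift; have := g_cvx s (z + u) (z + v) s01; lra.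
have rho_lip : C.-lipschitz rho.
  apply/lipschitzP => u v; have := (lipschitzP g C).1 g_lip (z + u) (z + v).
  by rewrite opprD addrACA subrr add0r /rho; lra.
have rho_phi u : D u -> - rho u <= phi u.
  move=> Du; have := z_min (z + u).
  by rewrite (fE _ Du) -(fineK fz_fin) -!EFinD lee_fin /rho /phi; lra.
have phi0 : phi 0 = 0 by rewrite /phi addr0 subrr.
have rho0 : rho 0 = 0 by rewrite /rho addr0 subrr.
have [L [L_lin L_phi L_rho]] :=
  sandwich D0 phi0 rho0 D_convex phi_convex rho_convex rho_lip rho_phi.
have LB x y : L (x - y) = L x - L y := linear_functionalB L_lin x y.
have L_lip : C.-lipschitz L.
  apply/lipschitzP => x y; rewrite -LB.
  have := (lipschitzP rho C).1 rho_lip (- (x - y)) 0.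
  by rewrite rho0 !subr0 normrN; have := L_rho (x - y); lra.
exists L; split => [|x]; last first.
  by have := L_rho (z - x); rewrite /rho opprB subrKC !LB; lra.
split; first by split=> //; exact: lipschitz_continuous L_lip.
split; first by rewrite inE /edom /=; move: D0; rewrite /D addr0.
move=> x; have [Dxz|] := boolP (D (x - z)); last first.
  by rewrite negbK /D subrKC => /eqP ->; rewrite leey.
have := L_phi _ Dxz; rewrite /phi; move: (fE _ Dxz); rewrite subrKC => ->.
by rewrite -(fineK fz_fin) -EFinD lee_fin; lra.
Qed.

End subdifferential.

Section proposition1.
Variables (R : realType) (X : completeNormedModType R).

Lemma ekeland_subgradient (f : X -> \bar R) (k : X -> R) (C lam B : R) x1 :
  (forall x, f x != -oo%E) -> convex_fun f -> lower_semicontinuous f ->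
  f x1 \is a fin_num -> convex_real k -> C.-lipschitz k ->
  (forall x, (B%:E <= f x + (k x)%:E)%E) -> 0 < lam ->
  exists z p, [/\ subdiff f z p, (f z + (k z)%:E <= f x1 + (k x1)%:E)%E
                & p z <= k 0 - k z + lam * `|z|].
Proof.
move=> f_fin f_cvx f_lsc fx1_fin k_cvx k_lip fk_ge lam_gt0.
have G_lsc : lower_semicontinuous (fun x => f x + (k x)%:E)%E.
  exact: lsc_addr_continuous f_lsc (lipschitz_continuous k_lip).
have Gx1_fin : (f x1 + (k x1)%:E)%E \is a fin_num by rewrite fin_numD fx1_fin.
have [z [Gz_le z_min]] := ekeland lam_gt0 G_lsc fk_ge Gx1_fin.
have fz_fin : f z \is a fin_num.
  move: Gz_le; rewrite -(fineK Gx1_fin) fin_numE f_fin /=.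
  by case: (f z).
pose g x := k x + lam * `|x - z|.
have [|||p [p_sub p_g]] := subdiff_at_minimizer (g := g) (C := C + lam) f_fin f_cvx fz_fin.
- exact: convex_realD k_cvx (convex_dist z (ltW lam_gt0)).
- exact: lipschitzD k_lip (dist_lipschitz z (ltW lam_gt0)).
- move=> x; have := z_min x; rewrite /g subrr normr0 mulr0 addr0.
  by rewrite EFinD addeA.
exists z, p; split=> //.
have := p_g 0; rewrite /g sub0r normrN subrr normr0 mulr0 addr0.
by rewrite (linear_functionalN p_sub.1.1); lra.
Qed.

Lemma origin_minimizes (f : X -> \bar R) x1 (c1 : R) :
  (forall x, f x != -oo%E) -> convex_fun f -> lower_semicontinuous f ->
  (forall x p, x \in dom_subdiff f -> subdiff f x p -> 0 <= p x) ->
  f x1 = c1%:E -> (f 0%R <= c1%:E)%E.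
Proof.
move=> f_fin f_cvx f_lsc p_ge0 fx1; rewrite leNgt; apply/negP => /ereal_gt_fin_gap[e e_gt0 e_lt].
pose r := `|x1|; have r_ge0 : 0 <= r := normr_ge0 x1.
pose mu := e / (r + 1); have mu_gt0 : 0 < mu by rewrite divr_gt0 // ltr_wpDl.
have mur_le : mu * r <= e.
  by rewrite /mu mulrAC ler_pdivrMr ?ltr_wpDl // ler_pM2l // lerDl.
have f0_gt : ((c1 + mu * r)%:E < f 0%R)%E.
  by apply: le_lt_trans e_lt; rewrite lee_fin lerD2l.
have [M M_ge0 f_ge] := convex_lsc_minorant f_fin f_cvx f_lsc fx1.
pose k : X -> R := norm_penalty mu M r.
have k_cvx : convex_real k := norm_penalty_convex _ (ltW mu_gt0) M_ge0.
have k_lip : (mu + M).-lipschitz k := norm_penalty_lipschitz _ (ltW mu_gt0) M_ge0.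
have fk_ge x : ((c1 - 1 - 2 * M * r)%:E <= f x + (k x)%:E)%E.
  have := f_ge x; case: (f x) (f_fin x) => [v| |] //= _; last by rewrite addye ?leey.
  rewrite -EFinD !lee_fin; have := norm_penalty_ge_K r (ltW mu_gt0) M_ge0 x.
  by have := ler_wpM2l M_ge0 (ler_normB x x1); rewrite -/(k x) -/r; lra.
have fx1_fin : f x1 \is a fin_num by rewrite fx1.
have [z [p [p_sub fz_le p_le]]] := ekeland_subgradient f_fin f_cvx f_lsc
  fx1_fin k_cvx k_lip fk_ge (divr_gt0 mu_gt0 (ltr0Sn _ 1)).
have k0 : k 0 = 0 := norm_penalty0 _ _ _ r_ge0.
have z_neq0 : z != 0.
  apply: contraTneq fz_le => ->; rewrite -ltNge fx1 k0 addr0.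
  by rewrite /k norm_penalty_sphere // -EFinD.
have z_dom : z \in dom_subdiff f by rewrite inE; exists p.
have := p_ge0 z p z_dom p_sub.
have := norm_penalty_ge_mu mu r M_ge0 z; rewrite -/k.
have := normr_gt0 z; rewrite z_neq0 => /(mulr_gt0 mu_gt0) muz_gt0.
by rewrite k0 in p_le; lra.
Qed.

End proposition1.

Theorem proposition1 (R : realType) (X : completeNormedModType R)
  (f : X -> \bar R) :
  proper_fun f -> convex_fun f -> lower_semicontinuous f ->
  (forall (x : X) (p : X -> R), x \in dom_subdiff f -> subdiff f x p ->
     0 <= p x) ->
  subdiff f 0 (fun _ => 0).
Proof.
move=> [f_fin [x' fx'_fin]] f_cvx f_lsc p_ge0.
have f0_le x c : f x = c%:E -> (f 0%R <= c%:E)%E := origin_minimizes f_fin f_cvx f_lsc p_ge0.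
split; first by split=> [a x y|]; [rewrite mulr0 addr0 | exact: cst_continuous].
split.
  rewrite inE /edom /=; move: fx'_fin (f_fin x') (f0_le x').
  by case: (f x') => // c _ _ /(_ c erefl); case: (f 0%R).
move=> x; rewrite adde0; move: (f0_le x) (f_fin x).
by case: (f x) => [c /(_ c erefl)| |] //= _ _; rewrite leey.
Qed.
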